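(* Let $p$ be a prime, $d,t$ positive integers, $W=\mathbb{F}_p^d$, $U=\mathbb{F}_p^t$, and $V=\mathbb{F}_p^{d+t}=W\oplus U$. Let $g$ be a complete mapping of $U$ of cycle type $x_1^{k_1}\cdots x_{p^t}^{k_{p^t}}$, and for $\ell=1,\ldots,p^t$ enumerate its cycles of length $\ell$ as $\zeta_{\ell,i}=(u_{\ell,i,0},u_{\ell,i,1},\ldots,u_{\ell,i,\ell-1})$, $i=1,\ldots,k_\ell$ (so $g(u_{\ell,i,j})=u_{\ell,i,(j+1)\bmod \ell}$). For each such $\ell,i$ and $j=0,\ldots,\ell-1$ choose $M_{\ell,i,j}\in\operatorname{CGL}_d(p)$, and choose $w_{\ell,i}\in W$; put $\gamma_{\ell,i}=\operatorname{CT}(\lambda(M_{\ell,i,0}M_{\ell,i,1}\cdots M_{\ell,i,\ell-1},w_{\ell,i}))$. For $u=u_{\ell,i,j}$ define $\alpha_u:W\to W$, $w\mapsto wM_{\ell,i,j}$; $\omega_u=0$ if $j<\ell-1$ and $\omega_u=w_{\ell,i}$ if $j=\ell-1$; and $\nu_u=u_{\ell,i,(j+1)\bmod\ell}-u_{\ell,i,j}$. Then the $W$-coset-wise $\mathbb{F}_p$-affine function \[ f:V\to V,\quad w+u\mapsto \alpha_u(w)+u+\omega_u+\nu_u\quad(w\in W,u\in U) \] is a complete mapping of $V$ with cycle type $\prod_{\ell=1}^{p^t}\prod_{i=1}^{k_\ell}\operatorname{BU}_\ell(\gamma_{\ell,i})$.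
   Context: A complete mapping of an additive group $G$ is a permutation $h$ of $G$ such that $x\mapsto h(x)+x$ is also a permutation. Vectors are row vectors; for a $(d\times d)$-matrix $M$ over $\mathbb{F}_p$ and $v\in\mathbb{F}_p^d$, $\lambda(M,v)$ is the map $x\mapsto xM+v$ on $\mathbb{F}_p^d$. $\operatorname{CGL}_d(p)$ is the set of invertible $(d\times d)$-matrices over $\mathbb{F}_p$ not having $-1$ as an eigenvalue. The cycle type $\operatorname{CT}(\sigma)$ of a permutation $\sigma$ of a finite set $\Omega$ is the monomial $x_1^{k_1}\cdots x_{|\Omega|}^{k_{|\Omega|}}\in\mathbb{Q}[x_n:n\ge1]$ with $k_j$ the number of $j$-cycles. $\operatorname{BU}_\ell$ is the $\mathbb{Q}$-algebra endomorphism of $\mathbb{Q}[x_n:n\ge1]$ with $x_n\mapsto x_{\ell n}$. *)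

From HB Require Import structures.
From mathcomp Require Import all_boot all_order all_algebra all_fingroup.
Set Implicit Arguments. Unset Strict Implicit. Unset Printing Implicit Defensive.
Import GRing.Theory.
Local Open Scope ring_scope.

Definition complete_mapping (G : zmodType) (h : G -> G) : Prop :=
  bijective h /\ bijective (fun x => h x + x).

Definition CGL (p d : nat) (M : 'M['F_p]_d) : bool :=
  (M \in unitmx) && ~~ eigenvalue M (-1).

Definition lam (p d : nat) (M : 'M['F_p]_d) (v : 'rV['F_p]_d) :
  'rV['F_p]_d -> 'rV['F_p]_d := fun x => x *m M + v.

(* Monomials x_1^{k_1} x_2^{k_2} ... of Q[x_n : n >= 1] are encoded by their
   exponent vectors m : nat -> nat (m n = exponent of x_n; index 0 unused,
   always 0 for the monomials below). *)
Definition monomial := nat -> nat.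

Definition cycles (T : finType) (s : T -> T) : {set {set T}} :=
  [set [set y | fconnect s x y] | x : T].

Definition CT (T : finType) (s : T -> T) : monomial :=
  fun j => #|[set C in cycles s | #|C| == j]|.

(* BU_l : x_n |-> x_{l n}, on monomials: the exponent of x_n in BU_l(m) is
   the exponent of x_{n/l} in m if l divides n, and 0 otherwise. *)
Definition BU (l : nat) (m : monomial) : monomial :=
  fun n => if (0 < n)%N && (l %| n)%N then m (n %/ l)%N else 0%N.

Definition mono_mul (m1 m2 : monomial) : monomial := fun n => (m1 n + m2 n)%N.
Definition mono_one : monomial := fun _ => 0%N.

(* Write x = row_mx w u with w in W and u in U. Then f maps the coset W + u to
   the coset W + g(u) by an invertible affine map, i.e. f is a skew product over
   g; so is x |-> f(x) + x, over the permutation u |-> g(u) + u, with fibre maps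
   w |-> w(M + 1) + c, invertible because -1 is not an eigenvalue of M.
   Along an l-cycle of g through u0, the l-th iterate of f preserves the coset
   W + u0 and acts there as the first-return map lambda(M_0 ... M_(l-1), w).
   Hence a point of that coset whose return-map orbit has length m lies on an
   f-cycle of length l m, and the l cosets over the cycle contain equally many
   points of each f-order.  Counting the points of f-order n cycle by cycle
   gives n CT(f)_n = n (prod BU_l(gamma))_n. *)

From Stdlib Require Import FunctionalExtensionality.
From HB Require Import structures.
From mathcomp Require Import all_boot all_order all_algebra all_fingroup.
Import GRing.Theory.

Set Implicit Arguments.
Unset Strict Implicit.
Unset Printing Implicit Defensive.

Notation forder := fingraph.order.

Section OrderOfIterates.

Variables (T : finType) (f : T -> T).
Hypothesis f_inj : injective f.

Lemma iter_order_dvd x m : (iter m f x == x) = (forder f x %| m).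
Proof.
rewrite {1}(divn_eq m (forder f x)) addnC iterD iterM.
rewrite (iter_fix _ (iter_order f_inj x)).
have lt_r := ltn_pmod m (fingraph.order_gt0 f x).
rewrite /dvdn; apply/eqP/eqP => [fix_x | ->] //.
by rewrite -(findex_iter lt_r) fix_x findex0.
Qed.

Lemma order_eq_of_dvd x l :
  (forall m, (iter m f x == x) = (l %| m)) -> forder f x = l.
Proof.
move=> Hl; apply/eqP.
by rewrite eqn_dvd -iter_order_dvd Hl dvdnn -Hl iter_order ?eqxx.
Qed.

Lemma order_iter k x : forder f (iter k f x) = forder f x.
Proof.
apply/esym/eq_card.
by move=> y; apply: (same_connect (fconnect_sym f_inj) (fconnect_iter f k x)).
Qed.

Lemma order_eq_of_period x l : 0 < l -> iter l f x = x ->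
  (forall k, 0 < k < l -> iter k f x != x) -> forder f x = l.
Proof.
move=> l_gt0 fix_x no_fix; have ox_dvd : forder f x %| l.
  by rewrite -iter_order_dvd fix_x.
apply/eqP; rewrite eqn_leq dvdn_leq //= leqNgt; apply/negP => lt_ol.
have := no_fix (forder f x); rewrite fingraph.order_gt0 lt_ol iter_order //.
by rewrite eqxx => /(_ isT).
Qed.

End OrderOfIterates.

Section CycleType.

Variables (T : finType) (s : T -> T).
Hypothesis s_inj : injective s.

Lemma card_order_set n : #|[set x | forder s x == n]| = CT s n * n.
Proof.
set X := [set x | forder s x == n].
have same_orbit x y : fconnect s x y -> fconnect s x =1 fconnect s y.
  exact: (same_connect (fconnect_sym s_inj)).
have card_orbit x : #|[set y | fconnect s x y]| = forder s x by rewrite cardsE.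
have orbitX x : x \in X -> [set y in X | fconnect s x y] = [set y | fconnect s x y].
  move=> Xx; apply/setP => y; rewrite !inE andb_idl // => /same_orbit/eq_card oxy.
  by rewrite inE in Xx; rewrite /fingraph.order -oxy.
have fconnect_equiv : {in X & &, equivalence_rel (fconnect s)}.
  by move=> x y z _ _ _; split=> [|/same_orbit]; [apply: connect0 | apply].
rewrite /CT.
have -> : [set C in cycles s | #|C| == n] = equivalence_partition (fconnect s) X.
  apply/setP => C; rewrite inE; apply/andP/imsetP => [[/imsetP[x _ ->]] | [x Xx ->]].
    rewrite card_orbit => ox; have Xx : x \in X by rewrite inE.
    by exists x; rewrite ?orbitX.
  by rewrite orbitX // card_orbit; split; [apply: imset_f | rewrite inE in Xx].
rewrite (card_partition (equivalence_partitionP fconnect_equiv)) -sum_nat_const.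
apply: eq_bigr => _ /imsetP[x Xx ->]; rewrite orbitX // card_orbit.
by apply/eqP; rewrite inE in Xx.
Qed.

Lemma CT0 : CT s 0 = 0.
Proof.
apply/eqP; rewrite cards_eq0; apply/eqP/setP => C; rewrite !inE.
apply/negbTE/andP => -[/imsetP[x _ ->]] /eqP/cards0_eq/setP/(_ x).
by rewrite !inE connect0.
Qed.

Lemma card_mul_order_set l n : 0 < l -> 0 < n ->
  l * #|[set x | l * forder s x == n]| = BU l (CT s) n * n.
Proof.
move=> l_gt0 n_gt0; rewrite /BU n_gt0 /=.
have [/dvdnP[k ->] | ndvd_ln] := boolP (l %| n).
  rewrite mulnK // [k * l]mulnC mulnCA -card_order_set; congr (l * _).
  by apply: eq_card => x; rewrite !inE eqn_pmul2l.
rewrite mul0n; apply/eqP; rewrite muln_eq0 cards_eq0; apply/orP; right.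
apply/eqP/setP => x; rewrite !inE; apply: contraNF ndvd_ln => /eqP <-.
exact: dvdn_mulr.
Qed.

End CycleType.

Lemma mono_prodE (I : Type) (r : seq I) (P : pred I) (F : I -> monomial) n :
  (\big[mono_mul/mono_one]_(i <- r | P i) F i) n = \sum_(i <- r | P i) F i n.
Proof. by elim/big_rec2: _ => // i y1 y2 _ <-. Qed.

Section TripleEnumeration.

Variables (B : finType) (m n : nat) (c e : nat -> nat).
Variable u : nat -> nat -> nat -> B.
Let ok l i j := [&& m <= l < n, i < c l & j < e l].
Hypothesis u_inj : forall l i j l' i' j', ok l i j -> ok l' i' j' ->
  u l i j = u l' i' j' -> [/\ l = l', i = i' & j = j'].
Hypothesis u_surj : forall b, exists l i j, ok l i j /\ u l i j = b.

Lemma big_enum_triples (R : Type) (idx : R) (op : Monoid.com_law idx) F :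
  \big[op/idx]_(b : B) F b =
  \big[op/idx]_(m <= l < n) \big[op/idx]_(i < c l) \big[op/idx]_(j < e l)
     F (u l i j).
Proof.
pose s := [seq (l, ij) | l <- index_iota m n,
            ij <- [seq (i, j) | i <- index_iota 0 (c l), j <- index_iota 0 (e l)]].
pose U x := u x.1 x.2.1 x.2.2.
have s_ok x : x \in s -> ok x.1 x.2.1 x.2.2.
  case/allpairsPdep => l [_ [l_in /allpairsP[[i j] /= [i_in j_in ->]] ->]] /=.
  by move: l_in i_in j_in; rewrite !mem_index_iota /ok => -> /= -> ->.
have ok_s l i j : ok l i j -> (l, (i, j)) \in s.
  case/and3P => l_in i_in j_in; apply/allpairsPdep; exists l, (i, j).
  rewrite mem_index_iota l_in; split=> //; apply/allpairsP; exists (i, j).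
  by rewrite !mem_index_iota i_in j_in.
have s_uniq : uniq s.
  apply: allpairs_uniq_dep => [|l _|]; rewrite ?iota_uniq //.
    by apply: allpairs_uniq => [||[? ?] [? ?] _ _ [-> ->]]; rewrite ?iota_uniq.
  by move=> [? ?] [? ?] _ _ [-> ->].
have U_inj : {in s &, injective U}.
  move=> [l [i j]] [l' [i' j']] /s_ok ok1 /s_ok ok2.
  by case/(u_inj ok1 ok2) => /= -> -> ->.
have perm_sB : perm_eq (map U s) (enum B).
  apply: uniq_perm; rewrite ?enum_uniq ?map_inj_in_uniq // => b; rewrite mem_enum.
  have [l [i [j [okl <-]]]] := u_surj b.
  by apply/mapP; exists (l, (i, j)); rewrite ?ok_s.
rewrite -big_enum -(perm_big _ perm_sB) big_map big_allpairs_dep.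
apply: eq_bigr => l _; rewrite big_allpairs big_mkord; apply: eq_bigr => i _.
by rewrite big_mkord.
Qed.

End TripleEnumeration.

Section SkewProduct.

Variables (A B T : finType) (pair : A -> B -> T).
Hypothesis pair_bij : bijective (fun ab : A * B => pair ab.1 ab.2).
Variables (g : B -> B) (h : B -> A -> A) (F : T -> T).
Hypothesis g_inj : injective g.
Hypothesis h_inj : forall b, injective (h b).
Hypothesis F_pair : forall a b, F (pair a b) = pair (h b a) (g b).

Lemma pair_inj a b a' b' : pair a b = pair a' b' -> a = a' /\ b = b'.
Proof. by move/(bij_inj pair_bij (x1 := (a, b)) (x2 := (a', b'))) => [-> ->]. Qed.

Lemma pair_surj x : exists a b, x = pair a b.
Proof. by case: pair_bij => ab _ abK; exists (ab x).1, (ab x).2; rewrite abK. Qed.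

Lemma skew_inj : injective F.
Proof.
move=> x y; have [a [b ->]] := pair_surj x; have [a' [b' ->]] := pair_surj y.
rewrite !F_pair => /pair_inj[/[swap] /g_inj <- /h_inj ->] //.
Qed.

Lemma card_set_pair (P : pred T) :
  #|[set x | P x]| = \sum_(b : B) #|[set a | P (pair a b)]|.
Proof.
have card_sum (I : finType) (Q : pred I) : #|[set i | Q i]| = \sum_i Q i.
  by rewrite -sum1_card big_mkcond; apply: eq_bigr => i _; rewrite inE; case: (Q i).
rewrite card_sum (reindex _ (onW_bij _ pair_bij)).
rewrite -(pair_bigA _ (fun a b => (P (pair a b) : nat))) exchange_big /=.
by apply: eq_bigr => b _; rewrite card_sum.
Qed.

Fixpoint fiber_iter k b a : A :=
  if k is k'.+1 then h (iter k' g b) (fiber_iter k' b a) else a.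

Lemma iter_skew k a b : iter k F (pair a b) = pair (fiber_iter k b a) (iter k g b).
Proof. by elim: k => //= k ->; rewrite F_pair. Qed.

Lemma fiber_iterD k1 k2 b a :
  fiber_iter (k1 + k2) b a = fiber_iter k1 (iter k2 g b) (fiber_iter k2 b a).
Proof. by elim: k1 => //= k1 ->; rewrite iterD. Qed.

Lemma fiber_iter_inj k b : injective (fiber_iter k b).
Proof. by elim: k => //= k IH x y /h_inj /IH. Qed.

Definition first_return b := fiber_iter (forder g b) b.

Lemma fiber_iter_mul_order k b :
  fiber_iter (k * forder g b) b =1 iter k (first_return b).
Proof.
elim: k => // k IH a; rewrite mulSn fiber_iterD iterM.
by rewrite (iter_fix _ (iter_order g_inj b)) IH.
Qed.

Lemma order_skew a b :
  forder F (pair a b) = forder g b * forder (first_return b) a.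
Proof.
have R_inj : injective (first_return b) := @fiber_iter_inj _ b.
apply: (order_eq_of_dvd skew_inj) => m; rewrite iter_skew.
have o_gt0 := fingraph.order_gt0 g b.
apply/eqP/idP => [/pair_inj[fix_a fix_b] | dvd_m].
  have /dvdnP[k def_m] : forder g b %| m by rewrite -(iter_order_dvd g_inj) fix_b.
  rewrite def_m [_ * forder _ a]mulnC dvdn_pmul2r // -(iter_order_dvd R_inj).
  by rewrite -fiber_iter_mul_order -def_m fix_a.
have /dvdnP[k def_m] := dvdn_trans (dvdn_mulr _ (dvdnn _)) dvd_m.
rewrite def_m fiber_iter_mul_order iterM (iter_fix _ (iter_order g_inj b)).
congr pair; apply/eqP; rewrite (iter_order_dvd R_inj) -(dvdn_pmul2r o_gt0) -def_m.
by rewrite mulnC.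
Qed.

Lemma card_fiber_iter j b n :
  #|[set a | forder F (pair a (iter j g b)) == n]| =
  #|[set a | forder F (pair a b) == n]|.
Proof.
rewrite -(card_preimset _ (@fiber_iter_inj j b)); apply: eq_card => a.
by rewrite !inE -iter_skew (order_iter skew_inj).
Qed.

Lemma sum_card_cycle_fibers b n : 0 < n ->
  \sum_(j < forder g b) #|[set a | forder F (pair a (iter j g b)) == n]| =
  BU (forder g b) (CT (first_return b)) n * n.
Proof.
move=> n_gt0; under eq_bigr do rewrite card_fiber_iter.
rewrite sum_nat_const card_ord -(card_mul_order_set _ (fingraph.order_gt0 g b) n_gt0).
  by congr (_ * _); apply: eq_card => a; rewrite !inE order_skew.
exact: fiber_iter_inj.
Qed.

End SkewProduct.

Local Open Scope ring_scope.

Lemma row_mx_bij (R : Type) (m n1 n2 : nat) :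
  bijective (fun ab : 'M[R]_(m, n1) * 'M[R]_(m, n2) => row_mx ab.1 ab.2).
Proof.
exists (fun x => (lsubmx x, rsubmx x)) => [[a b] | x] /=.
  by rewrite row_mxKl row_mxKr.
exact: hsubmxK.
Qed.

Section CGLAffine.

Variables (p d : nat) (M : 'M['F_p]_d) (v : 'rV['F_p]_d).
Hypothesis M_CGL : CGL M.

Lemma CGL_lam_inj : injective (lam M v).
Proof. by case/andP: M_CGL => M_unit _ x y /addIr /(can_inj (mulmxK M_unit)). Qed.

Lemma CGL_lam_addid_inj : injective (fun x => lam M v x + x).
Proof.
case/andP: M_CGL => _ no_eig x y; rewrite /lam addrAC [y *m M + v + y]addrAC.
move/addIr => E; apply/eqP; rewrite -subr_eq0; apply: contraNT no_eig => nz_xy.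
apply/eigenvalueP; exists (x - y) => //; rewrite scaleN1r mulmxBl opprB.
by apply/eqP; rewrite subr_eq addrC addrA -E addrK.
Qed.

End CGLAffine.

Section CosetwiseAffineLift.

Variables (p d t : nat) (g : 'rV['F_p]_t -> 'rV['F_p]_t).
Hypothesis g_complete : complete_mapping g.
Variable u : nat -> nat -> nat -> 'rV['F_p]_t.
Variables (M : nat -> nat -> nat -> 'M['F_p]_d) (w0 : nat -> nat -> 'rV['F_p]_d).
Let valid l i j := [&& (1 <= l <= p ^ t)%N, (i < CT g l)%N & (j < l)%N].
Hypothesis u_cycle : forall l i j, valid l i j -> g (u l i j) = u l i (j.+1 %% l)%N.
Hypothesis u_inj : forall l i j l' i' j', valid l i j -> valid l' i' j' ->
  u l i j = u l' i' j' -> [/\ l = l', i = i' & j = j'].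
Hypothesis u_surj : forall x, exists l i j, valid l i j /\ u l i j = x.
Hypothesis M_CGL : forall l i j, valid l i j -> CGL (M l i j).
Variable f : 'rV['F_p]_(d + t) -> 'rV['F_p]_(d + t).
Hypothesis f_row_mx : forall l i j, valid l i j -> forall w : 'rV['F_p]_d,
  f (row_mx w (u l i j)) =
  row_mx (w *m M l i j + (if (j < l.-1)%N then 0 else w0 l i))
         (u l i j + (u l i (j.+1 %% l)%N - u l i j)).

Let g_inj : injective g. Proof. by case: g_complete => /bij_inj. Qed.

Lemma valid_cycle l i j k : valid l i j -> (k < l)%N -> valid l i k.
Proof. by case/and3P => ? ? _ ?; apply/and3P. Qed.

Definition fiber_map b a := lsubmx (f (row_mx a b)).

Lemma fiber_map_u l i j : valid l i j ->
  fiber_map (u l i j) =1 lam (M l i j) (if (j < l.-1)%N then 0 else w0 l i).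
Proof. by move=> v a; rewrite /fiber_map f_row_mx // row_mxKl. Qed.

Lemma f_skew a b : f (row_mx a b) = row_mx (fiber_map b a) (g b).
Proof.
have [l [i [j [v <-]]]] := u_surj b.
by rewrite /fiber_map f_row_mx // row_mxKl (u_cycle v) subrKC.
Qed.

Lemma fiber_map_inj b : injective (fiber_map b).
Proof.
have [l [i [j [v <-]]]] := u_surj b.
exact: eq_inj (CGL_lam_inj (M_CGL v)) (fsym (fiber_map_u v)).
Qed.

Lemma f_complete : complete_mapping f.
Proof.
have fiber_addid_inj b : injective (fun a => fiber_map b a + a).
  have [l [i [j [v <-]]]] := u_surj b.
  apply: eq_inj (CGL_lam_addid_inj (M_CGL v)) _ => a.
  by rewrite fiber_map_u.
split; apply: injF_bij.
  exact: (skew_inj (@row_mx_bij _ 1 d t) g_inj fiber_map_inj f_skew).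
have gD_inj : injective (fun b => g b + b) by case: g_complete => _ /bij_inj.
have fD_skew a b : f (row_mx a b) + row_mx a b = row_mx (fiber_map b a + a) (g b + b).
  by rewrite f_skew add_row_mx.
exact: (skew_inj (@row_mx_bij _ 1 d t) gD_inj fiber_addid_inj fD_skew).
Qed.

Lemma iter_g_u l i j : valid l i 0 -> (j < l)%N -> iter j g (u l i 0) = u l i j.
Proof.
move=> v0; elim: j => // j IH lt_jl; rewrite iterS IH ?(ltnW lt_jl) //.
by rewrite u_cycle ?modn_small // (valid_cycle v0 (ltnW lt_jl)).
Qed.

Lemma order_g_u l i : valid l i 0 -> forder g (u l i 0) = l.
Proof.
move=> v0; have l_gt0 : (0 < l)%N by case/and3P: v0.
apply: (order_eq_of_period g_inj l_gt0) => [|k /andP[k_gt0 lt_kl]].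
  rewrite -[in iter l _ _](prednK l_gt0) iterS iter_g_u ?prednK //.
  by rewrite u_cycle ?(valid_cycle v0) ?prednK ?modnn.
rewrite iter_g_u //; apply/eqP => /(u_inj (valid_cycle v0 lt_kl) v0) [_ _ k0].
by rewrite k0 in k_gt0.
Qed.

Lemma first_return_u l i : valid l i 0 ->
  first_return g fiber_map (u l i 0) =1 lam (\prod_(j < l) M l i j) (w0 l i).
Proof.
move=> v0 a; have l_gt0 : (0 < l)%N by case/and3P: v0.
have fiber_iter_u k : (k <= l)%N -> fiber_iter g fiber_map k (u l i 0) a =
    a *m \prod_(j < k) M l i j + (if (k < l)%N then 0 else w0 l i).
  elim: k => [|k IH] lt_kl /=; first by rewrite big_ord0 -idmxE mulmx1 l_gt0 addr0.
  rewrite IH ?(ltnW lt_kl) // lt_kl addr0 iter_g_u //.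
  rewrite fiber_map_u ?(valid_cycle v0 lt_kl) // /lam ltn_predRL.
  by rewrite big_ord_recr /= -mulmxE mulmxA.
by rewrite /first_return order_g_u // fiber_iter_u // ltnn.
Qed.

Lemma sum_card_fibers_cycle l i n : valid l i 0 -> (0 < n)%N ->
  (\sum_(j < l) #|[set a | forder f (row_mx a (u l i j)) == n]|)%N =
  (BU l (CT (lam (\prod_(j < l) M l i j) (w0 l i))) n * n)%N.
Proof.
move=> v0 n_gt0.
have := sum_card_cycle_fibers (@row_mx_bij _ 1 d t) g_inj fiber_map_inj f_skew
  (u l i 0) n_gt0.
rewrite order_g_u // (functional_extensionality _ _ (first_return_u v0)) => <-.
by apply: eq_bigr => j _; rewrite iter_g_u.
Qed.

End CosetwiseAffineLift.

Theorem theorem4p5 (p d t : nat) (hp : prime p) (hd : (0 < d)%N) (ht : (0 < t)%N)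
  (g : 'rV['F_p]_t -> 'rV['F_p]_t) (hg : complete_mapping g)
  (u : nat -> nat -> nat -> 'rV['F_p]_t)
  (M : nat -> nat -> nat -> 'M['F_p]_d)
  (w0 : nat -> nat -> 'rV['F_p]_d)
  (valid := fun l i j => [&& (1 <= l <= p ^ t)%N, (i < CT g l)%N & (j < l)%N])
  (Hcyc : forall l i j, valid l i j -> g (u l i j) = u l i (j.+1 %% l)%N)
  (Hinj : forall l i j l' i' j', valid l i j -> valid l' i' j' ->
            u l i j = u l' i' j' -> [/\ l = l', i = i' & j = j'])
  (Hcover : forall x, exists l i j, valid l i j /\ u l i j = x)
  (HM : forall l i j, valid l i j -> CGL (M l i j))
  (f : 'rV['F_p]_(d + t) -> 'rV['F_p]_(d + t))
  (Hf : forall l i j, valid l i j -> forall w : 'rV['F_p]_d,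
      f (row_mx w (u l i j)) =
      row_mx (w *m M l i j + (if (j < l.-1)%N then 0 else w0 l i))
             (u l i j + (u l i (j.+1 %% l)%N - u l i j))) :
  complete_mapping f /\
  CT f = \big[mono_mul/mono_one]_(1 <= l < (p ^ t).+1)
           \big[mono_mul/mono_one]_(i < CT g l)
              BU l (CT (lam (\prod_(j < l) M l i j) (w0 l i))).
Proof.
have f_cm := f_complete hg Hcyc Hcover HM Hf.
split=> //; have f_inj : injective f by case: f_cm => /bij_inj.
apply: functional_extensionality => n; rewrite mono_prodE.
under eq_bigr do rewrite mono_prodE.
have [-> | n_gt0] := posnP n; first by rewrite CT0 big1 // => l _; rewrite big1.
apply/eqP; rewrite -(eqn_pmul2r n_gt0) big_distrl /=; apply/eqP.
rewrite -(card_order_set f_inj) (card_set_pair (@row_mx_bij _ 1 d t)) /=.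
rewrite (@big_enum_triples _ 1 (p ^ t).+1 (CT g) id u Hinj Hcover).
apply: eq_big_nat => l /andP[l_gt0 l_le]; rewrite big_distrl; apply: eq_bigr => i _.
have v0 : valid l i 0 by rewrite /valid l_gt0 -ltnS l_le ltn_ord.
exact: (sum_card_fibers_cycle hg Hcyc Hinj Hcover HM Hf v0 n_gt0).
Qed.
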